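(* Let $T=(t_{ij})$ be an $\mathbb{N}$-tableau of shape $\lambda$ and let $\widetilde{U}_T=(\widetilde{u}_{ijk})$ be the array defined in the context. Then for all $(i,j,k)$ in its index set: $\widetilde{u}_{i,j,0}=-\mathrm{rect}_T(i,j)$, $\widetilde{u}_{i,j,\min(i,j)}=0$, and for $0<k<\min(i,j)$, \[\widetilde{u}_{ijk}=\max\bigl(\widetilde{u}_{i-1,j,k}+\widetilde{u}_{i,j-1,k-1},\ \widetilde{u}_{i-1,j,k-1}+\widetilde{u}_{i,j-1,k}\bigr)-\widetilde{u}_{i-1,j-1,k-1}.\] That is, $\widetilde{U}_T$ satisfies the tropical octahedron recurrence.
   Context: Partitions are drawn in English notation with matrix coordinates: the box in row $i$ and column $j$ is $(i,j)$. An $\mathbb{N}$-tableau of shape $\lambda$ is an assignment of a nonnegative integer to each box of $\lambda$. For a box $(i,j)$ of $\lambda$, $\mathrm{rect}_T(i,j)=\sum_{k=1}^{i}\sum_{l=1}^{j}t_{kl}$; if $(i,j)$ is not a box of $\lambda$, $\mathrm{rect}_T(i,j)$ is interpreted as $0$. The array $U_T=(u_{ijk})$ is indexed by all $(i,j,k)\in\mathbb{Z}^3$ such that $(i+a,j+b)$ is a box of $\lambda$ for some $a,b\in\{0,1,2\}$ and $0\le k\le\min(i,j)+1$. Its entries are: $u_{i,j,0}=0$ and $u_{i,j,\min(i,j)+1}=0$, and for $0<k<\min(i,j)+1$, \[u_{ijk}=\min(u_{i-1,j,k-1},u_{i,j-1,k-1})+\max(u_{i-1,j,k},u_{i,j-1,k})-u_{i-1,j-1,k-1}+t_{ijk},\]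 where $t_{ij1}=t_{ij}$ if $(i,j)\in\lambda$ (and $0$ otherwise) and $t_{ijk}=0$ for $k\ne1$. The array $\overline{U}_T=(\overline{u}_{ijk})$ is indexed by all $(i,j,k)\in\mathbb{Z}^3$ such that $(i+a,j+b)$ is a box of $\lambda$ for some $a,b\in\{0,1\}$ and $0\le k\le\min(i,j)$, with $\overline{u}_{ijk}=\sum_{l=0}^{k}u_{ijl}$. Finally $\widetilde{U}_T=(\widetilde{u}_{ijk})$ has the same index set as $\overline{U}_T$ and $\widetilde{u}_{ijk}=\overline{u}_{ijk}-\mathrm{rect}_T(i,j)$. *)

From mathcomp Require Import all_boot all_order all_algebra.
Set Implicit Arguments. Unset Strict Implicit. Unset Printing Implicit Defensive.
Import Order.TTheory GRing.Theory Num.Theory.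
Local Open Scope ring_scope.

Definition is_partition (la : seq nat) : bool :=
  sorted geq la && all (fun x => (0 < x)%N) la.

(* (i,j) is a box of la (English notation, 1-based matrix coordinates). *)
Definition in_shape (la : seq nat) (i j : nat) : bool :=
  [&& (0 < i)%N, (i <= size la)%N, (0 < j)%N & (j <= nth 0%N la i.-1)%N].

(* An N-tableau of shape la is given by T : nat -> nat -> nat; only the
   values T i j at boxes (i,j) of la are ever used. *)

Definition tval (la : seq nat) (T : nat -> nat -> nat) (i j : nat) : int :=
  if in_shape la i j then (T i j)%:Z else 0.

Definition rect (la : seq nat) (T : nat -> nat -> nat) (i j : nat) : int :=
  if in_shape la i j then
    \sum_(1 <= k < i.+1) \sum_(1 <= l < j.+1) (T k l)%:Z
  else 0.

(* The array U_T = (u_{ijk}) on nonnegative indices (i,j,k):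
   u_{i,j,0} = 0, u_{i,j,min(i,j)+1} = 0 (and entries outside the index set,
   k > min(i,j)+1, are set to 0, they are never used), and for
   0 < k < min(i,j)+1:
   u_{ijk} = min(u_{i-1,j,k-1}, u_{i,j-1,k-1}) + max(u_{i-1,j,k}, u_{i,j-1,k})
             - u_{i-1,j-1,k-1} + t_{ijk}. *)
Fixpoint uarr (la : seq nat) (T : nat -> nat -> nat) (i : nat) : nat -> nat -> int :=
  match i with
  | 0%N => fun _ _ => 0
  | i'.+1 =>
    let prev := uarr la T i' in
    fix g (j : nat) : nat -> int :=
      match j with
      | 0%N => fun _ => 0
      | j'.+1 => fun k =>
        if (0 < k)%N && (k < minn i'.+1 j'.+1 + 1)%N then
          Num.min (prev j'.+1 k.-1) (g j' k.-1)
          + Num.max (prev j'.+1 k) (g j' k)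
          - prev j' k.-1
          + (if k == 1%N then tval la T i'.+1 j'.+1 else 0)
        else 0
      end
  end.

Definition ubar (la : seq nat) (T : nat -> nat -> nat) (i j k : nat) : int :=
  \sum_(0 <= l < k.+1) uarr la T i j l.

Definition utilde (la : seq nat) (T : nat -> nat -> nat) (i j k : nat) : int :=
  ubar la T i j k - rect la T i j.

From Pilot Require Import Defs.
From mathcomp Require Import all_boot all_order all_algebra zify ring lra.
Set Implicit Arguments. Unset Strict Implicit. Unset Printing Implicit Defensive.
Import Order.TTheory GRing.Theory Num.Theory.
Local Open Scope ring_scope.

(* Since min(x,y) = x + y - max(x,y), the defining recurrence of u telescopes
   when summed over k:
     ubar(i,j,k) = ubar(i-1,j,k-1) + ubar(i,j-1,k-1) - ubar(i-1,j-1,k-1)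
                   + max(u(i-1,j,k), u(i,j-1,k)) + t(i,j),
   while rect obeys the same inclusion-exclusion without the max term; writing
   ubar(.,.,k) = ubar(.,.,k-1) + u(.,.,k) turns the difference into the
   octahedron recurrence for utilde.  At k = min(i,j) one argument of the max
   lies outside the index range, hence is 0, and the other is nonnegative:
   each column u(i,j,.) is nonnegative and interlaces its neighbours,
   u(i,j,k+1) <= u(i-1,j,k) <= u(i,j,k), an invariant the recurrence preserves.
   Thus ubar(i,j,min(i,j)) = rect(i,j) by induction on (i,j). *)

Definition interlaced (R : numDomainType) (v w : nat -> R) : Prop :=
  forall k, (0 < k)%N -> v k.+1 <= w k <= v k.

Section OctahedronStep.
Variables (R : realDomainType) (a b c : nat -> R) (t : R).

Definition oct_step (k : nat) : R :=
  Num.min (a k.-1) (b k.-1) + Num.max (a k) (b k) - c k.-1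
  + (if k == 1%N then t else 0).

Hypotheses (a0 : a 0 = 0) (b0 : b 0 = 0).

Lemma sum_oct_step k :
  \sum_(0 <= l < k.+1) oct_step l.+1 =
  \sum_(0 <= l < k.+1) a l + \sum_(0 <= l < k.+1) b l - \sum_(0 <= l < k.+1) c l
  + Num.max (a k.+1) (b k.+1) + t.
Proof.
elim: k => [|k IH]; first by rewrite !big_nat1 /oct_step /= a0 b0 minxx; ring.
rewrite !(big_nat_recr k.+1) //= IH /oct_step /= minr_to_max; ring.
Qed.

Hypotheses (c0 : c 0 = 0) (t_ge0 : 0 <= t).
Hypotheses (ac : interlaced a c) (bc : interlaced b c).

Lemma max_le_oct_step k : (0 < k)%N -> Num.max (a k) (b k) <= oct_step k.
Proof.
case: k => [|[|k]] // _; rewrite /oct_step /=.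
  by rewrite a0 b0 c0 minxx add0r subr0 lerDl.
have : c k.+1 <= Num.min (a k.+1) (b k.+1).
  by rewrite le_min; case/andP: (ac (ltn0Sn k)) => _ ->; case/andP: (bc (ltn0Sn k)) => _ ->.
lra.
Qed.

Lemma oct_step_le_min k : (0 < k)%N -> oct_step k.+1 <= Num.min (a k) (b k).
Proof.
move=> k0; rewrite /oct_step /= (_ : k.+1 == 1%N = false); last by case: k k0.
have : Num.max (a k.+1) (b k.+1) <= c k.
  by rewrite ge_max; case/andP: (ac k0) => -> _; case/andP: (bc k0) => -> _.
lra.
Qed.

End OctahedronStep.

Lemma interlaced_trunc (R : numDomainType) (m : nat) (d f w : nat -> R) :
  (forall k, d k = if (0 < k)%N && (k <= m)%N then f k else 0) ->
  (forall k, 0 <= w k) -> (forall k, (m < k)%N -> w k = 0) ->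
  (forall k, (0 < k)%N -> w k <= f k) -> (forall k, (0 < k)%N -> f k.+1 <= w k) ->
  interlaced d w.
Proof.
move=> dE w_ge0 w_out wf fw k k0; rewrite !dE k0 /=.
case: (leqP k.+1 m) => [km|mk]; first by rewrite (ltnW km) fw // wf.
rewrite w_ge0 /=; case: leqP => [_|/w_out ->]; [exact: wf | exact: lexx].
Qed.

Section Arrays.
Variables (la : seq nat) (T : nat -> nat -> nat).
Local Notation u := (uarr la T).
Local Notation t := (Defs.tval la T).

Lemma uarrn0 i k : u i 0 k = 0. Proof. by case: i. Qed.
Lemma uarr_k0 i j : u i j 0 = 0. Proof. by case: i => [|i]; case: j. Qed.

Lemma uarr_SS i j k :
  u i.+1 j.+1 k = if (0 < k)%N && (k <= minn i.+1 j.+1)%N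
                  then oct_step (u i j.+1) (u i.+1 j) (u i j) (t i.+1 j.+1) k else 0.
Proof. by rewrite [LHS]/= addn1. Qed.

Lemma uarr_out i j k : (minn i j < k)%N -> u i j k = 0.
Proof.
case: i => [|i] // k_gt; case: j k_gt => [|j] k_gt; first by rewrite uarrn0.
by rewrite uarr_SS [(k <= _)%N]leqNgt k_gt andbF.
Qed.

Lemma uarr_rec i j k : (0 < k)%N -> (k <= minn i.+1 j.+1)%N ->
  u i.+1 j.+1 k = oct_step (u i j.+1) (u i.+1 j) (u i j) (t i.+1 j.+1) k.
Proof. by move=> k_gt0 k_le; rewrite uarr_SS k_gt0 k_le. Qed.

Lemma tval_ge0 i j : 0 <= t i j.
Proof. by rewrite /Defs.tval; case: ifP. Qed.

Lemma uarr_interlaced i j :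
  [/\ forall k, 0 <= u i j k, interlaced (u i j) (u i.-1 j)
    & interlaced (u i j) (u i j.-1)].
Proof.
elim: i j => [|i IHi] j; first by split=> // k; rewrite lexx.
elim: j => [|j IHj]; first by split=> // k; rewrite !uarrn0 ?lexx.
have [a_ge0 _ ac] := IHi j.+1; have [b_ge0 bc _] := IHj.
have d_ge := max_le_oct_step (uarr_k0 _ _) (uarr_k0 _ _) (uarr_k0 _ _)
  (tval_ge0 i.+1 j.+1) ac bc.
have d_le := oct_step_le_min (t i.+1 j.+1) ac bc.
have ad : interlaced (u i.+1 j.+1) (u i j.+1).
  apply: interlaced_trunc (uarr_SS i j) a_ge0 _ _ _.
  - by move=> k k_gt; apply: uarr_out; lia.
  - by move=> k /d_ge; rewrite ge_max => /andP[].
  - by move=> k /d_le; rewrite le_min => /andP[].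
have bd : interlaced (u i.+1 j.+1) (u i.+1 j).
  apply: interlaced_trunc (uarr_SS i j) b_ge0 _ _ _.
  - by move=> k k_gt; apply: uarr_out; lia.
  - by move=> k /d_ge; rewrite ge_max => /andP[].
  - by move=> k /d_le; rewrite le_min => /andP[].
split=> // -[|k]; first by rewrite uarr_k0.
by apply: le_trans (a_ge0 k.+1) _; case/andP: (ad k.+1 isT).
Qed.

Lemma uarr_ge0 i j k : 0 <= u i j k.
Proof. by case: (uarr_interlaced i j). Qed.

Lemma ubar_k0 i j : ubar la T i j 0 = 0.
Proof. by rewrite /ubar big_nat1 uarr_k0. Qed.

Lemma ubarS i j k : ubar la T i j k.+1 = ubar la T i j k + u i j k.+1.
Proof. by rewrite /ubar big_nat_recr. Qed.

Lemma ubar_rec i j k : (k <= minn i j)%N ->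
  ubar la T i.+1 j.+1 k.+1 =
  ubar la T i j.+1 k + ubar la T i.+1 j k - ubar la T i j k
  + Num.max (u i j.+1 k.+1) (u i.+1 j k.+1) + t i.+1 j.+1.
Proof.
move=> k_le; rewrite /ubar big_nat_recl // uarr_k0 add0r.
rewrite -(sum_oct_step (u i j) _ (uarr_k0 i j.+1) (uarr_k0 i.+1 j)).
by apply: eq_big_nat => l /andP[_ l_lt]; rewrite uarr_rec //; lia.
Qed.

Lemma ubar_stable i j k : (minn i j <= k)%N -> ubar la T i j k = ubar la T i j (minn i j).
Proof.
move=> /subnKC <-; elim: (k - minn i j)%N => [|d IH]; first by rewrite addn0.
by rewrite addnS ubarS IH uarr_out ?addr0 //; lia.
Qed.

(* Unlike [rect], [trect] is not truncated to 0 outside the shape, so it obeys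
   inclusion-exclusion everywhere. *)
Definition trect (i j : nat) : int :=
  \sum_(1 <= k < i.+1) \sum_(1 <= l < j.+1) t k l.

Lemma trect0n j : trect 0 j = 0.
Proof. by rewrite /trect big_geq. Qed.

Lemma trectn0 i : trect i 0 = 0.
Proof. by rewrite /trect big1 // => k _; rewrite big_geq. Qed.

Lemma trect_rec i j :
  trect i.+1 j.+1 = trect i j.+1 + trect i.+1 j - trect i j + t i.+1 j.+1.
Proof.
have col n : trect n j.+1 = trect n j + \sum_(1 <= k < n.+1) t k j.+1.
  by rewrite /trect -big_split; apply: eq_bigr => k _; rewrite big_nat_recr.
by rewrite !col [\sum_(1 <= k < i.+2) _]big_nat_recr //=; ring.
Qed.

Lemma ubar_min i j : ubar la T i j (minn i j) = trect i j.
Proof.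
elim: i j => [|i IHi] j; first by rewrite min0n ubar_k0 trect0n.
elim: j => [|j IHj]; first by rewrite minn0 ubar_k0 trectn0.
set m := minn i j.
have a_out : (i <= j)%N -> u i j.+1 m.+1 = 0 by move=> ?; apply: uarr_out; lia.
have b_out : (j <= i)%N -> u i.+1 j m.+1 = 0 by move=> ?; apply: uarr_out; lia.
have max_add : Num.max (u i j.+1 m.+1) (u i.+1 j m.+1) = u i j.+1 m.+1 + u i.+1 j m.+1.
  case: (leqP i j) => [/a_out|/ltnW/b_out] ->.
  - by rewrite add0r; apply/max_idPr; apply: uarr_ge0.
  - by rewrite addr0; apply/max_idPl; apply: uarr_ge0.
have a_sat : ubar la T i j.+1 m + u i j.+1 m.+1 = trect i j.+1.
  by rewrite -ubarS ubar_stable ?IHi //; lia.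
have b_sat : ubar la T i.+1 j m + u i.+1 j m.+1 = trect i.+1 j.
  by rewrite -ubarS ubar_stable ?IHj //; lia.
rewrite minnSS ubar_rec // max_add trect_rec -a_sat -b_sat -(IHi j); ring.
Qed.

Definition utilde' (i j k : nat) : int := ubar la T i j k - trect i j.

Lemma utilde'_k0 i j : utilde' i j 0 = - trect i j.
Proof. by rewrite /utilde' ubar_k0 sub0r. Qed.

Lemma utilde'_min i j : utilde' i j (minn i j) = 0.
Proof. by rewrite /utilde' ubar_min subrr. Qed.

Lemma utilde'S i j k : utilde' i j k.+1 = utilde' i j k + u i j k.+1.
Proof. by rewrite /utilde' ubarS addrAC. Qed.

Lemma utilde'_octahedron i j k : (k <= minn i j)%N ->
  utilde' i.+1 j.+1 k.+1 =
  Num.max (utilde' i j.+1 k.+1 + utilde' i.+1 j k)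
          (utilde' i j.+1 k + utilde' i.+1 j k.+1) - utilde' i j k.
Proof.
move=> k_le; rewrite (utilde'S i j.+1) (utilde'S i.+1 j).
rewrite (addrAC (utilde' i j.+1 k)) (addrA (utilde' i j.+1 k) (utilde' i.+1 j k)) -addr_maxr.
by rewrite /utilde' ubar_rec // trect_rec; ring.
Qed.

End Arrays.

Lemma in_shape_le la i j i' j' : is_partition la -> in_shape la i j ->
  (0 < i' <= i)%N -> (0 < j' <= j)%N -> in_shape la i' j'.
Proof.
move=> /andP[la_sorted _] /and4P[i_gt0 i_le j_gt0 j_le] /andP[i'_gt0 i'_le] /andP[j'_gt0 j'_le].
have geq_trans : transitive geq by move=> x y z /[swap]; apply: leq_trans.
apply/and4P; split=> //; first by lia.
apply: leq_trans j'_le (leq_trans j_le _).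
by apply: (sorted_leq_nth geq_trans leqnn 0%N la_sorted); rewrite ?inE; lia.
Qed.

Lemma rect_trect la T i j i' j' : is_partition la -> in_shape la i j ->
  (i' <= i)%N -> (j' <= j)%N -> rect la T i' j' = trect la T i' j'.
Proof.
move=> la_part ij_shape i'_le j'_le.
case: (posnP i') => [->|i'_gt0]; first by rewrite trect0n /rect /in_shape.
case: (posnP j') => [->|j'_gt0]; first by rewrite trectn0 /rect /in_shape !andbF.
rewrite /rect (in_shape_le la_part ij_shape) ?i'_gt0 ?j'_gt0 //.
apply: eq_big_nat => k /andP[k_gt0 k_le]; apply: eq_big_nat => l /andP[l_gt0 l_le].
by rewrite /Defs.tval (in_shape_le la_part ij_shape) //; lia.
Qed.

Theorem proposition4p3 (la : seq nat) (T : nat -> nat -> nat) :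
  is_partition la ->
  forall i j : nat,
    (exists a b : nat, [/\ (a <= 1)%N, (b <= 1)%N & in_shape la (i + a) (j + b)]) ->
    [/\ utilde la T i j 0 = - rect la T i j,
        utilde la T i j (minn i j) = 0
      & forall k : nat, (0 < k)%N -> (k < minn i j)%N ->
          utilde la T i j k =
            Num.max (utilde la T i.-1 j k + utilde la T i j.-1 k.-1)
                    (utilde la T i.-1 j k.-1 + utilde la T i j.-1 k)
            - utilde la T i.-1 j.-1 k.-1].
Proof.
move=> la_part i j [a [b [a_le b_le ij_shape]]].
have utildeE i' j' k : (i' <= i)%N -> (j' <= j)%N ->
    utilde la T i' j' k = utilde' la T i' j' k.
  by move=> i'_le j'_le; rewrite /utilde (rect_trect T la_part ij_shape) //; lia.
split.
- by rewrite utildeE // utilde'_k0 (rect_trect T la_part ij_shape) //; lia.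
- by rewrite utildeE // utilde'_min.
- move=> k k_gt0 k_lt; rewrite !utildeE ?leq_pred //.
  have [i' i_eq] : exists i', i = i'.+1 by exists i.-1; lia.
  have [j' j_eq] : exists j', j = j'.+1 by exists j.-1; lia.
  have [k' k_eq] : exists k', k = k'.+1 by exists k.-1; lia.
  by rewrite i_eq j_eq k_eq /= utilde'_octahedron //; lia.
Qed.
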